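(* Let $\Pi$ be a program (AST) of the DSL and let $e=(e_{in},e_{out})$ be an input-output example such that $\Pi$ does not satisfy $e$, i.e. $[\![\Pi]\!]e_{in}\neq e_{out}$. Then there exists a proof of incorrectness of $\Pi$ with respect to $e$, i.e. a mapping $\mathcal{I}$ from the nodes of $\Pi$ to abstract values over the universe $\mathcal{U}$ such that: (1) for every leaf $v$ of $\Pi$ labelled by a terminal $t$, $(t=[\![t]\!]e_{in})\sqsubseteq \mathcal{I}(v)$; (2) for every internal node $v$ labelled $f$ with children $v_1,\dots,v_n$, $[\![f(\mathcal{I}(v_1),\dots,\mathcal{I}(v_n))]\!]^\#\sqsubseteq \mathcal{I}(v)$; (3) $e_{out}\notin\gamma(\mathcal{I}(r))$, where $r$ is the root of $\Pi$.
   Context: A DSL is given by a context-free grammar $G$ with start symbol $s_0$. Each production has the form $s\to t$ with $t$ a terminal, which is either the program input variable $x$ or a constant, or $s\to f(s_1,\dots,s_n)$ with $f$ a DSL function symbol. Programs are finite abstract syntax trees derived from $s_0$: each leaf is labelled by a terminal, each internal node by a function symbol $f$ whose children are derived from $s_1,\dots,s_n$, and each node carries the grammar symbol it is derived from. Concrete semantics: $[\![x]\!]c=c$ for an input $c$; $[\![t]\!]c=[\![t]\!]$, the fixed value of a constant $t$; and $[\![f(\Pi_1,\dots,\Pi_n)]\!]c=[\![f]\!]([\![\Pi_1]\!]c,\dots,[\![\Pi_n]\!]c)$. An example is a pair $e=(e_{in},e_{out})$, and $\Pi$ satisfies $e$ iff $[\![\Pi]\!]e_{in}=e_{out}$. A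 predicate over a grammar symbol $s$ is a logical formula whose only free variable is $s$ (e.g. $s=c$ or $0<s\le 8$). An abstract value for $s$ is a conjunction of predicates over $s$, where $\mathit{true}$ is the empty conjunction. $\gamma(\varphi)$ denotes the set of values satisfying $\varphi$, and $\varphi\sqsubseteq\varphi'$ means $\varphi\Rightarrow\varphi'$. A fixed universe $\mathcal{U}$ of predicates is given; an abstract value over $\mathcal{U}$ is a conjunction of predicates from $\mathcal{U}$. It is assumed that $\mathcal{U}$ contains, for every grammar symbol $s$ and every value $c$ of the corresponding type, the predicate $s=c$. For each production $s\to f(s_1,\dots,s_n)$ there is an abstract transformer mapping abstract values $\varphi_1,\dots,\varphi_n$ (over $s_1,\dots,s_n$) to an abstract value $[\![f(\varphi_1,\dots,\varphi_n)]\!]^\#$ over $s$. It is sound: $c_i\in\gamma(\varphi_i)$ for all $i$ implies $[\![f]\!](c_1,\dots,c_n)\in\gamma([\![f(\varphi_1,\dots,\varphi_n)]\!]^\#)$. It is also precise on concrete inputs: $[\![f(s_1=c_1,\dots,s_n=c_n)]\!]^\#\sqsubseteq (s=[\![f]\!](c_1,\dots,c_n))$. *)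

From Stdlib Require Import List.
Import ListNotations.
Set Implicit Arguments.

Inductive terminal (K : Type) : Type :=
| TInput : terminal K
| TConst : K -> terminal K.
Arguments TInput {K}.

Record DSL := {
  Sym   : Type;
  Val   : Type;
  Const : Type;
  Fn    : Type;
  const_val : Const -> Val;
  fn_sem : Fn -> list Val -> Val;
  start : Sym;
  prodT : Sym -> terminal Const -> Prop;   (* productions s -> t *)
  prodF : Sym -> Fn -> list Sym -> Prop;   (* productions s -> f(s1,...,sn) *)
  Pred  : Type;                      (* predicates (formulas with one free grammar symbol) *)
  pred_sym : Pred -> Sym;
  pred_sem : Pred -> Val -> Prop;
  eqp : Sym -> Val -> Pred;          (* the predicate  s = c *)
  univ : Pred -> Prop;
  (* abstract transformer of production s -> f(s1..sn), applied to phi1..phin *)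
  absT : Sym -> Fn -> list Sym -> list (list Pred) -> list Pred
}.

Section Defs.
Variable D : DSL.

(* abstract values = conjunctions (lists) of predicates *)
Definition absval := list (Pred D).

Definition gamma (phi : absval) (v : Val D) : Prop :=
  forall p, In p phi -> pred_sem D p v.

Definition absle (phi phi' : absval) : Prop :=
  forall v, gamma phi v -> gamma phi' v.

Definition over (s : Sym D) (phi : absval) : Prop :=
  forall p, In p phi -> pred_sym D p = s.

Definition overU (phi : absval) : Prop :=
  forall p, In p phi -> univ D p.

Definition term_sem (t : terminal (Const D)) (c : Val D) : Val D :=
  match t with TInput => c | TConst k => const_val D k end.

Inductive prog : Type :=
| Leaf : Sym D -> terminal (Const D) -> prog
| Node : Sym D -> Fn D -> list prog -> prog.

Definition psym (p : prog) : Sym D :=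
  match p with Leaf s _ => s | Node s _ _ => s end.

Fixpoint wf (p : prog) : Prop :=
  match p with
  | Leaf s t => prodT D s t
  | Node s f cs =>
      prodF D s f (map psym cs) /\
      (fix wfl (l : list prog) : Prop :=
         match l with nil => True | c :: l' => wf c /\ wfl l' end) cs
  end.

Definition program (p : prog) : Prop := psym p = start D /\ wf p.

Fixpoint eval (p : prog) (c : Val D) : Val D :=
  match p with
  | Leaf _ t => term_sem t c
  | Node _ f cs => fn_sem D f (map (fun q => eval q c) cs)
  end.

(* Nodes of a program are addressed by paths (lists of child indices);
   the root is []. A mapping I from nodes to abstract values is a function on
   paths. [proof_at I ein pos p] states conditions (1),(2) (and that the
   values are abstract values over U for the node's symbol) for every node of
   the subtree p located at position pos. *)
Fixpoint proof_at (I : list nat -> absval) (ein : Val D) (pos : list nat) (p : prog)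
  : Prop :=
  match p with
  | Leaf s t =>
      overU (I pos) /\ over s (I pos) /\
      absle [eqp D s (term_sem t ein)] (I pos)
  | Node s f cs =>
      overU (I pos) /\ over s (I pos) /\
      absle (absT D s f (map psym cs)
               (map (fun i => I (pos ++ [i])) (seq 0 (length cs))))
            (I pos) /\
      (fix pl (i : nat) (l : list prog) : Prop :=
         match l with
         | nil => True
         | c :: l' => proof_at I ein (pos ++ [i]) c /\ pl (S i) l'
         end) 0 cs
  end.

Definition incorrectness_proof (I : list nat -> absval) (p : prog) (ein eout : Val D)
  : Prop :=
  proof_at I ein [] p /\ ~ gamma (I []) eout.

End Defs.

(* The equality predicates make the concrete semantics itself an abstract
   semantics over U: labelling every node v with the single predicate
   [s_v = [[v]] e_in] satisfies (1) trivially and (2) by precision of the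
   transformers on concrete inputs, and since [[Π]] e_in <> e_out the root
   label excludes e_out, which is (3). *)

From Stdlib Require Import List Lia.
Import ListNotations.
Set Implicit Arguments.
Unset Strict Implicit.

Lemma map_seq_nth_error {A B} (F : nat -> B) (g : A -> B) (l : list A) (k : nat) :
  (forall j a, nth_error l j = Some a -> F (k + j) = g a) ->
  map F (seq k (length l)) = map g l.
Proof.
  revert k; induction l as [|a l IH]; intros k H; simpl; [reflexivity|].
  f_equal.
  - rewrite <- (H 0 a eq_refl); f_equal; lia.
  - apply IH; intros j b Hj.
    rewrite <- (H (S j) b Hj); f_equal; lia.
Qed.

Lemma combine_map {A B C} (f : A -> B) (g : A -> C) (l : list A) :
  combine (map f l) (map g l) = map (fun x => (f x, g x)) l.
Proof. induction l; simpl; congruence. Qed.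

Section Subprograms.
Variable D : DSL.

Lemma prog_nested_ind (Q : prog D -> Prop) :
  (forall s t, Q (Leaf D s t)) ->
  (forall s f cs, Forall Q cs -> Q (Node s f cs)) ->
  forall p, Q p.
Proof.
  intros HL HN; fix IH 1; intros [s t|s f cs]; [apply HL|apply HN].
  induction cs as [|c cs IHcs]; constructor; auto.
Qed.

Fixpoint subprog (p : prog D) (pos : list nat) : option (prog D) :=
  match pos, p with
  | [], _ => Some p
  | i :: pos', Node _ _ cs =>
      match nth_error cs i with Some c => subprog c pos' | None => None end
  | _ :: _, Leaf _ _ _ => None
  end.

Lemma subprog_snoc p pos s f cs i c :
  subprog p pos = Some (Node s f cs) -> nth_error cs i = Some c ->
  subprog p (pos ++ [i]) = Some c.
Proof.
  revert p; induction pos as [|j pos IH]; intros [s' t'|s' f' cs'] Hp Hc;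
    simpl in *; try discriminate.
  - injection Hp as -> -> ->; now rewrite Hc.
  - destruct (nth_error cs' j); [now apply IH|discriminate].
Qed.

Lemma wf_child s f cs i c :
  wf (Node (D := D) s f cs) -> nth_error cs i = Some c -> wf c.
Proof.
  intros [_ Hcs]; revert i Hcs; induction cs as [|c' cs IH];
    intros [|i] Hcs Hi; simpl in Hi; try discriminate.
  - injection Hi as <-; exact (proj1 Hcs).
  - exact (IH i (proj2 Hcs) Hi).
Qed.

(* Convertible to the children conjunct of [proof_at] when [k = 0]. *)
Definition children_proof_at (lab : list nat -> absval D) (ein : Val D)
  (pos : list nat) : nat -> list (prog D) -> Prop :=
  fix pl (k : nat) (l : list (prog D)) : Prop :=
    match l with
    | nil => True
    | c :: l' => proof_at lab ein (pos ++ [k]) c /\ pl (S k) l'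
    end.

Lemma children_proof_atP lab ein pos cs k :
  (forall j c, nth_error cs j = Some c -> proof_at lab ein (pos ++ [k + j]) c) ->
  children_proof_at lab ein pos k cs.
Proof.
  revert k; induction cs as [|c cs IH]; intros k H; simpl; [exact I|split].
  - rewrite (plus_n_O k); exact (H 0 c eq_refl).
  - apply IH; intros j c' Hj.
    simpl; rewrite plus_n_Sm; exact (H (S j) c' Hj).
Qed.

End Subprograms.

Section ConcreteProof.
Variable D : DSL.
Hypothesis eqp_sym : forall s c, pred_sym D (eqp D s c) = s.
Hypothesis univ_eqp : forall s c, univ D (eqp D s c).
Hypothesis absT_precise : forall s f ss (cs : list (Val D)),
  prodF D s f ss -> length cs = length ss ->
  absle (absT D s f ss (map (fun sc => [eqp D (fst sc) (snd sc)]) (combine ss cs)))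
        [eqp D s (fn_sem D f cs)].

Variables (P : prog D) (ein : Val D).

Definition concrete_absval (q : prog D) : absval D :=
  [eqp D (psym q) (eval q ein)].

Definition concrete_labelling (pos : list nat) : absval D :=
  match subprog P pos with Some q => concrete_absval q | None => [] end.

Lemma concrete_labelling_subprog pos q :
  subprog P pos = Some q -> concrete_labelling pos = concrete_absval q.
Proof. unfold concrete_labelling; now intros ->. Qed.

Lemma concrete_absval_overU q : overU (concrete_absval q).
Proof. intros p [<-|[]]; apply univ_eqp. Qed.

Lemma concrete_absval_over q : over (psym q) (concrete_absval q).
Proof. intros p [<-|[]]; apply eqp_sym. Qed.

Lemma concrete_children s f cs pos :
  subprog P pos = Some (Node s f cs) ->
  map (fun i => concrete_labelling (pos ++ [i])) (seq 0 (length cs)) =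
  map concrete_absval cs.
Proof.
  intros Hpos; apply map_seq_nth_error; intros j c Hj.
  cbn; unfold concrete_labelling; now rewrite (subprog_snoc Hpos Hj).
Qed.

Lemma concrete_transfer s f cs :
  prodF D s f (map (psym (D := D)) cs) ->
  absle (absT D s f (map (psym (D := D)) cs) (map concrete_absval cs))
        (concrete_absval (Node s f cs)).
Proof.
  intros Hprod.
  pose proof (absT_precise (cs := map (fun q => eval q ein) cs) Hprod) as Hprec.
  rewrite combine_map, map_map, !length_map in Hprec.
  exact (Hprec eq_refl).
Qed.

Lemma concrete_proof_at q pos :
  subprog P pos = Some q -> wf q -> proof_at concrete_labelling ein pos q.
Proof.
  revert pos; induction q as [s t|s f cs IHcs] using prog_nested_ind;
    intros pos Hpos Hwf; simpl proof_at;
    rewrite (concrete_labelling_subprog Hpos).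
  - repeat split; [apply concrete_absval_overU|apply concrete_absval_over|].
    intros v Hv; exact Hv.
  - repeat split; [apply concrete_absval_overU|apply concrete_absval_over| |].
    + rewrite (concrete_children Hpos).
      exact (concrete_transfer (proj1 Hwf)).
    + apply (children_proof_atP (k := 0)); intros j c Hj.
      apply (proj1 (Forall_forall _ _) IHcs c (nth_error_In _ _ Hj)).
      * exact (subprog_snoc Hpos Hj).
      * exact (wf_child Hwf Hj).
Qed.

End ConcreteProof.

Theorem mainTheorem1 (D : DSL)
  (* semantics of the predicates  s = c *)
  (eqp_sem : forall s c v, pred_sem D (eqp D s c) v <-> v = c)
  (eqp_sym : forall s c, pred_sym D (eqp D s c) = s)
  (* U contains s = c for every symbol s and value c *)
  (univ_eqp : forall s c, univ D (eqp D s c))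
  (* transformers produce abstract values over the head symbol *)
  (absT_over : forall s f ss phis, prodF D s f ss ->
      over s (absT D s f ss phis))
  (* soundness of the abstract transformers *)
  (absT_sound : forall s f ss (phis : list (absval D)) (cs : list (Val D)),
      prodF D s f ss -> length phis = length ss ->
      Forall2 (fun phi c => gamma phi c) phis cs ->
      gamma (absT D s f ss phis) (fn_sem D f cs))
  (* precision on concrete inputs *)
  (absT_precise : forall s f ss (cs : list (Val D)),
      prodF D s f ss -> length cs = length ss ->
      absle (absT D s f ss (map (fun sc => [eqp D (fst sc) (snd sc)]) (combine ss cs)))
            [eqp D s (fn_sem D f cs)])
  (P : prog D) (ein eout : Val D) :
  program P -> eval P ein <> eout ->
  exists I : list nat -> absval D, incorrectness_proof I P ein eout.
Proof.
  intros [_ Hwf] Hne.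
  exists (concrete_labelling P ein); split.
  - exact (concrete_proof_at eqp_sym univ_eqp absT_precise ein (pos := []) eq_refl Hwf).
  - intros Hroot; apply Hne; symmetry.
    apply (eqp_sem (psym P)), Hroot; left; reflexivity.
Qed.
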